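(* Let $A \in \{-1,0,1\}^{m\times n}$ have pairwise distinct columns $A_1,\dots,A_n$, and let $t \in [0,1)^m$ be such that $\Delta_k(t+A) \le 1$ for $k \in \{1,2\}$. Then every set $E \in \mathcal{E}_A$ is the support of at most two columns of $A$.
   Context: For a real matrix $M$ and $k\ge 1$, $\Delta_k(M)$ denotes the maximum of $|\det(B)|$ over all $k\times k$ submatrices $B$ of $M$. For $t\in\mathbb{R}^m$, $t+A$ is the matrix with columns $t+A_1,\dots,t+A_n$. The support of $y \in \mathbb{R}^m$ is $\mathrm{supp}(y)=\{j\in[m]: y_j\neq 0\}$, and $\mathcal{E}_A = \{\mathrm{supp}(A_i) : i \in [n]\}\subseteq 2^{[m]}$. *)

From mathcomp Require Import all_boot all_order all_algebra.
From mathcomp Require Import reals.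
Set Implicit Arguments. Unset Strict Implicit. Unset Printing Implicit Defensive.
Import Order.TTheory GRing.Theory Num.Theory.
Local Open Scope ring_scope.

(* A k x k submatrix is given by k distinct rows (injective f) and
   k distinct columns (injective g); reordering rows/columns does not
   change |det|, so ranging over injective maps is the same maximum. *)
Definition Delta (R : realFieldType) (m n k : nat) (M : 'M[R]_(m, n)) : R :=
  \big[Num.max/0]_(f : {ffun 'I_k -> 'I_m} | injectiveb f)
    \big[Num.max/0]_(g : {ffun 'I_k -> 'I_n} | injectiveb g)
      `|\det (mxsub f g M)|.

Definition shift_mx (R : pzRingType) (m n : nat) (t : 'cV[R]_m) (A : 'M[R]_(m, n))
  : 'M[R]_(m, n) := \matrix_(i, j) (t i 0 + A i j).

Definition col_supp (R : pzRingType) (m n : nat) (A : 'M[R]_(m, n)) (j : 'I_n)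
  : {set 'I_m} := [set i | A i j != 0].

From mathcomp Require Import all_boot all_order all_algebra.
From mathcomp Require Import reals.
From mathcomp Require Import lra.
Set Implicit Arguments. Unset Strict Implicit. Unset Printing Implicit Defensive.
Import Order.TTheory GRing.Theory Num.Theory.
Local Open Scope ring_scope.

(** Since [t >= 0], the bound [|t_i + 1| <= 1] forces [t_i = 0]
    in every row where some column has an entry [1]. Two distinct columns
    with the same support differ in some row [i]; there they are opposite
    and nonzero, so one of them is [1] and [t_i = 0]. A third column with
    that support is nonzero in row [i], hence agrees there with one of the
    first two, say [c] and [c'], which now differ in a row [i'] with
    [t_i' = 0] and agree in row [i]. The 2x2 minor of [t + A] on rows
    [i, i'] and columns [c, c'] is then [+-2], contradicting [Delta_2 <= 1]. *)

Lemma le_Delta (R : realFieldType) m n k (M : 'M[R]_(m, n))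
    (f : {ffun 'I_k -> 'I_m}) (g : {ffun 'I_k -> 'I_n}) :
  injectiveb f -> injectiveb g -> `|\det (mxsub f g M)| <= Delta k M.
Proof.
move=> f_inj g_inj; apply: le_trans (le_bigmax_cond _ _ f_inj).
exact: (le_bigmax_cond _ _ g_inj).
Qed.

Lemma injectiveb_const1 (T : finType) (x : T) : injectiveb [ffun _ : 'I_1 => x].
Proof. by apply/injectiveP => a b _; rewrite !ord1. Qed.

Lemma injectiveb_pair (T : finType) (x y : T) :
  x != y -> injectiveb [ffun a : 'I_2 => if a == 0 then x else y].
Proof.
move=> xy; apply/injectiveP => a b; rewrite !ffunE.
by case: a b => [[|[|?]] ?] [[|[|?]] ?] //= => [|/eqP|/esym/eqP|];
  rewrite ?(negPf xy) // => _; apply: val_inj.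
Qed.

Lemma norm_entry_le_Delta1 (R : realFieldType) m n (M : 'M[R]_(m, n)) i j :
  `|M i j| <= Delta 1 M.
Proof.
have := le_Delta M (injectiveb_const1 i) (injectiveb_const1 j).
by rewrite det_mx11 !mxE !ffunE.
Qed.

Lemma norm_minor2_le_Delta2 (R : realFieldType) m n (M : 'M[R]_(m, n)) i i' j j' :
  i != i' -> j != j' -> `|M i j * M i' j' - M i j' * M i' j| <= Delta 2 M.
Proof.
move=> ii' jj'; have := le_Delta M (injectiveb_pair ii') (injectiveb_pair jj').
rewrite (expand_det_row _ 0) !big_ord_recl big_ord0 addr0 /cofactor !det_mx11.
by rewrite !mxE !ffunE /= /bump /= expr0 expr1 mul1r mulN1r mulrN.
Qed.

Lemma norm_trit (R : numDomainType) (a : R) :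
  a \in [:: -1; 0; 1] -> a != 0 -> `|a| = 1.
Proof. by rewrite !inE => /or3P[]/eqP->; rewrite ?eqxx ?normrN ?normr1. Qed.

Lemma trit_eq_or_opp (R : numDomainType) (a b : R) :
  a \in [:: -1; 0; 1] -> b \in [:: -1; 0; 1] -> a != 0 -> b != 0 ->
  b = a \/ b = - a.
Proof.
rewrite !inE => /or3P[]/eqP-> /or3P[]/eqP->; rewrite ?eqxx //= ?opprK;
  by [left | right].
Qed.

Lemma col_supp_eq0 (R : pzRingType) m n (A : 'M[R]_(m, n)) j j' i :
  col_supp A j = col_supp A j' -> (A i j == 0) = (A i j' == 0).
Proof. by move/setP/(_ i); rewrite !inE => /negb_inj. Qed.

Section ShiftedTernary.

Variables (R : realFieldType) (m n : nat) (A : 'M[R]_(m, n)) (t : 'cV[R]_m).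
Hypothesis A_trit : forall i j, A i j \in [:: -1; 0; 1].
Hypothesis A_col_inj : injective (fun j : 'I_n => col j A).
Hypothesis t_ge0 : forall i, 0 <= t i 0.
Hypothesis Delta1_le1 : Delta 1 (shift_mx t A) <= 1.
Hypothesis Delta2_le1 : Delta 2 (shift_mx t A) <= 1.

Lemma t_eq0_of_entry1 i j : A i j = 1 -> t i 0 = 0.
Proof.
move=> Aij1.
have := le_trans (norm_entry_le_Delta1 (shift_mx t A) i j) Delta1_le1.
by rewrite mxE Aij1 ler_norml => /andP[_]; have := t_ge0 i; lra.
Qed.

Lemma same_supp_opp_row j j' :
  j != j' -> col_supp A j = col_supp A j' ->
  exists i, [/\ t i 0 = 0, A i j' = - A i j & A i j != 0].
Proof.
move=> jj' supp_jj'.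
have [i Aij_neq] : exists i, A i j != A i j'.
  apply/existsP; apply: contraR jj' => /existsPn A_eq.
  by apply/eqP/A_col_inj/matrixP => i c; rewrite !mxE; apply/eqP/negPn/A_eq.
have Aij_nz : A i j != 0.
  apply: contraNneq Aij_neq => Aij0.
  by rewrite Aij0 eq_sym -(col_supp_eq0 i supp_jj') Aij0.
have Aij'_nz : A i j' != 0 by rewrite -(col_supp_eq0 i supp_jj').
have Aij'_opp : A i j' = - A i j.
  have [Eij|//] := trit_eq_or_opp (A_trit i j) (A_trit i j') Aij_nz Aij'_nz.
  by rewrite Eij eqxx in Aij_neq.
exists i; split=> //.
have := A_trit i j; rewrite !inE (negPf Aij_nz) /= => /orP[]/eqP Aij.
- by apply: (@t_eq0_of_entry1 i j'); rewrite Aij'_opp Aij opprK.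
- exact: (@t_eq0_of_entry1 i j).
Qed.

Lemma same_supp_agree_eq0 j j' k :
  j != j' -> col_supp A j = col_supp A j' -> t k 0 = 0 -> A k j = A k j' ->
  A k j = 0.
Proof.
move=> jj' supp_jj' tk Akj_eq; have [//|Akj_nz] := eqVneq (A k j) 0.
have [i [ti Aij'_opp Aij_nz]] := same_supp_opp_row jj' supp_jj'.
have ik : i != k.
  by apply: contraNneq Aij_nz => ik; move: Akj_eq; rewrite -ik Aij'_opp; lra.
have := le_trans (norm_minor2_le_Delta2 (shift_mx t A) ik jj') Delta2_le1.
rewrite !mxE ti tk !add0r Aij'_opp -Akj_eq mulNr opprK -mulr2n normrMn normrM.
by rewrite !norm_trit // mul1r; lra.
Qed.

Lemma card_same_supp_le2 j0 :
  (#|[set j : 'I_n | col_supp A j == col_supp A j0]| <= 2)%N.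
Proof.
rewrite leqNgt; apply/negP => /card_gt2P[x [y [z [[xS yS zS] [xy yz zx]]]]].
move: xS yS zS; rewrite !inE => /eqP supp_x /eqP supp_y /eqP supp_z.
have [i [ti Aiy_opp Aix_nz]] := same_supp_opp_row xy (etrans supp_x (esym supp_y)).
have Aiz_nz : A i z != 0.
  by rewrite -(col_supp_eq0 i (etrans supp_x (esym supp_z))).
have [Aiz_eq | Aiz_opp] := trit_eq_or_opp (A_trit i x) (A_trit i z) Aix_nz Aiz_nz.
- move/eqP: Aix_nz; apply; apply: (same_supp_agree_eq0 _ _ ti (esym Aiz_eq)).
    by rewrite eq_sym.
  by rewrite supp_x supp_z.
- have Aiy_nz : A i y != 0 by rewrite Aiy_opp oppr_eq0.
  move/eqP: Aiy_nz; apply; apply: (same_supp_agree_eq0 yz _ ti).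
    by rewrite supp_y supp_z.
  by rewrite Aiz_opp Aiy_opp.
Qed.

End ShiftedTernary.

Theorem proposition3p1 (R : realType) (m n : nat) (A : 'M[R]_(m, n)) (t : 'cV[R]_m) :
  (forall i j, A i j \in [:: -1; 0; 1]) ->
  injective (fun j : 'I_n => col j A) ->
  (forall i, 0 <= t i 0 < 1) ->
  Delta 1 (shift_mx t A) <= 1 ->
  Delta 2 (shift_mx t A) <= 1 ->
  forall j0 : 'I_n, (#|[set j : 'I_n | col_supp A j == col_supp A j0]| <= 2)%N.
Proof.
move=> A_trit A_col_inj t_range Delta1_le1 Delta2_le1.
have t_ge0 i : 0 <= t i 0 by case/andP: (t_range i).
exact: card_same_supp_le2.
Qed.
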